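(* If $n\ge 0$ is an integer such that $\deg_t\bigl(B_{n+1}(t)-B_n(t)\bigr)=1$, then $n=1$, and $B_2(t)-B_1(t)=t-1$.
   Context: The Stern polynomials $B_n(t)\in\mathbb{Z}[t]$, $n\ge 0$, are defined by $B_0(t)=0$, $B_1(t)=1$, $B_{2n}(t)=tB_n(t)$ and $B_{2n+1}(t)=B_n(t)+B_{n+1}(t)$ for $n\ge 1$. *)

From mathcomp Require Import all_boot all_order all_algebra.
Set Implicit Arguments. Unset Strict Implicit. Unset Printing Implicit Defensive.
Import GRing.Theory.
Local Open Scope ring_scope.

(* Stern polynomials B_n(t) in Z[t]:
   B_0 = 0, B_1 = 1, B_{2n} = t B_n, B_{2n+1} = B_n + B_{n+1} (n >= 1).
   Defined by fuel-bounded recursion; fuel n suffices for index n. *)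
Fixpoint stern_aux (k n : nat) : {poly int} :=
  match k with
  | 0%N => 0
  | k'.+1 =>
    if n == 0%N then 0
    else if n == 1%N then 1
    else if odd n then stern_aux k' n./2 + stern_aux k' (n./2).+1
    else 'X * stern_aux k' n./2
  end.

Definition stern (n : nat) : {poly int} := stern_aux n n.

Definition degt (p : {poly int}) : nat := (size p).-1.

(* Write D := B_(n+1) - B_n = a + b t with b <> 0.  Evaluation at 2 gives
   D(2) = 1 since B_m(2) = m, and evaluation at 0 gives D(0) = +1 or -1
   according to the parity of n, since B_m(0) = m mod 2.  For n even,
   D(0) = D(2) forces b = 0.  For n odd, D(0) = -1 and D(2) = 1 force
   D(1) = 0; but for n = 2k + 1 the recurrences give D(1) = -B_k(1), and
   B_k(1) > 0 unless k = 0. *)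

From mathcomp Require Import all_boot all_order all_algebra zify ring.
Import Order.TTheory GRing.Theory Num.Theory.
Local Open Scope ring_scope.

Lemma stern_auxS k n : stern_aux k.+1 n =
  if n == 0%N then 0 else if n == 1%N then 1
  else if odd n then stern_aux k n./2 + stern_aux k n./2.+1
  else 'X * stern_aux k n./2.
Proof. by []. Qed.

Lemma stern_aux_fuelS k n : (n <= k)%N -> stern_aux k.+1 n = stern_aux k n.
Proof.
elim: k n => [|k IHk] n le_nk; first by move: le_nk; rewrite leqn0 => /eqP ->.
rewrite stern_auxS [RHS]stern_auxS; case: eqP => // n_neq0; case: eqP => // n_neq1.
have n_eq := odd_double_half n.
have le_half : (n./2 <= k)%N by case: (odd n) n_eq => /= n_eq; lia.
case: ifP => odd_n; last by rewrite IHk.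
have le_halfS : (n./2.+1 <= k)%N by rewrite odd_n /= in n_eq; lia.
by rewrite !IHk.
Qed.

Lemma stern_aux_fuel k n : (n <= k)%N -> stern_aux k n = stern n.
Proof.
move=> le_nk; rewrite -(subnK le_nk); elim: (k - n)%N => [|d IHd] //.
by rewrite addSn stern_aux_fuelS ?IHd // leq_addl.
Qed.

Lemma sternE n : (1 < n)%N ->
  stern n = if odd n then stern n./2 + stern n./2.+1 else 'X * stern n./2.
Proof.
case: n => [|[|n]] // _; rewrite {1}/stern stern_auxS.
rewrite -[n.+2 == 0%N]/false -[n.+2 == 1%N]/false.
have n_eq := odd_double_half n.+2.
by case: (odd n.+2) n_eq => n_eq; rewrite !stern_aux_fuel //; lia.
Qed.

Lemma stern_double m : stern m.*2 = 'X * stern m.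
Proof.
case: m => [|m]; first by rewrite /stern /= mulr0.
by rewrite sternE ?odd_double ?doubleK //; lia.
Qed.

Lemma stern_odd m : stern m.*2.+1 = stern m + stern m.+1.
Proof.
case: m => [|m]; first by rewrite /stern /= add0r.
by rewrite sternE /= ?odd_double ?uphalf_double //; lia.
Qed.

Lemma stern_ind (P : nat -> Prop) :
  P 0%N -> P 1%N -> (forall m, P m -> P m.*2) ->
  (forall m, P m -> P m.+1 -> P m.*2.+1) -> forall n, P n.
Proof.
move=> P0 P1 Pdouble PdoubleS n; elim/ltn_ind: n => -[|[|n]] IHn //.
rewrite -[n.+2]odd_double_half; have n_eq := odd_double_half n.+2.
case: (odd n.+2) n_eq => /= n_eq.
- by apply: PdoubleS; apply: IHn; lia.
- by apply: Pdouble; apply: IHn; lia.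
Qed.

Lemma horner0_stern n : (stern n).[0] = (odd n)%:R.
Proof.
elim/stern_ind: n => [||m IHm|m IHm IHmS]; rewrite ?hornerE //.
- by rewrite stern_double hornerM hornerX mul0r odd_double.
- by rewrite stern_odd hornerD IHm IHmS /= odd_double; case: (odd m).
Qed.

Lemma horner2_stern n : (stern n).[2] = n%:R :> int.
Proof.
elim/stern_ind: n => [||m IHm|m IHm IHmS]; rewrite ?hornerE //.
- by rewrite stern_double hornerM hornerX IHm -muln2 natrM mulrC.
- by rewrite stern_odd hornerD IHm IHmS -natrD -addnn addnS.
Qed.

Lemma horner1_stern_gt0 n : (0 < (stern n).[1] :> int) = (0 < n)%N.
Proof.
elim/stern_ind: n => [||m IHm|m IHm IHmS]; rewrite ?hornerE //.
- by rewrite stern_double hornerM hornerX mul1r IHm double_gt0.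
- rewrite stern_odd hornerD ltr_wpDl ?IHmS // le0r IHm.
  by case: m {IHm IHmS} => [|m]; rewrite ?orbT // horner0.
Qed.

Lemma horner0_stern_succ_sub n :
  (stern n.+1 - stern n).[0] = if odd n then -1 else 1.
Proof. by rewrite hornerD hornerN !horner0_stern /=; case: (odd n). Qed.

Lemma horner2_stern_succ_sub n : (stern n.+1 - stern n).[2] = 1.
Proof. by rewrite hornerD hornerN !horner2_stern -natr1 addrAC subrr add0r. Qed.

Lemma horner1_stern_succ_sub_odd k :
  (stern k.*2.+2 - stern k.*2.+1).[1] = - (stern k).[1].
Proof.
rewrite -doubleS stern_double stern_odd.
by rewrite hornerD hornerN hornerM hornerX mul1r hornerD opprD addrCA subrr addr0.
Qed.

Section LinearPolynomial.
Variable R : comRingType.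
Implicit Type p : {poly R}.

Lemma horner_size2 p x : (size p <= 2)%N -> p.[x] = p`_0 + p`_1 * x.
Proof. by move=> /horner_coef_wide->; rewrite big_ord_recl big_ord1 expr0 mulr1. Qed.

Lemma horner_size2_midpoint p : (size p <= 2)%N -> p.[0] + p.[2] = p.[1] *+ 2.
Proof. by move=> sp; rewrite !horner_size2 //; ring. Qed.

End LinearPolynomial.

Lemma horner_size2_inj {R : idomainType} (p : {poly R}) :
  size p = 2%N -> injective (horner p).
Proof.
move=> sp x y; rewrite !horner_size2 ?sp // => /addrI; apply: mulfI.
have -> : p`_1 = lead_coef p by rewrite lead_coefE sp.
by rewrite lead_coef_eq0 -size_poly_eq0 sp.
Qed.

Theorem theorem5p4 (n : nat) :
  degt (stern n.+1 - stern n) = 1%N ->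
  n = 1%N /\ stern 2 - stern 1 = 'X - 1.
Proof.
rewrite /degt; set D := _ - _ => deg1.
have sD : size D = 2%N by move: deg1; case: (size D) => [|[|[|]]].
split; last by rewrite (stern_double 1) [stern 1]/= mulr1.
have := horner0_stern_succ_sub n; rewrite -/D.
have D2 : D.[2] = 1 := horner2_stern_succ_sub n.
case: ifP => odd_n D0; last by have /(horner_size2_inj _ sD) := etrans D0 (esym D2).
have D1 : D.[1] = 0.
  have : D.[1] *+ 2 == 0 by rewrite -horner_size2_midpoint ?sD // D0 D2 addNr.
  by rewrite mulrn_eq0 => /eqP.
have [k n_eq] : exists k, n = k.*2.+1.
  by exists n./2; rewrite -[LHS]odd_double_half odd_n.
move: D1; rewrite /D n_eq horner1_stern_succ_sub_odd => /eqP.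
rewrite oppr_eq0 => /eqP stern_k.
by move: (horner1_stern_gt0 k); rewrite stern_k ltxx; case: k {n_eq stern_k}.
Qed.
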